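(* Let $(S,\Delta,\mathbb{P})$ be a probability space, $(U,d)$ a separable metric space, $\mathfrak{X}$ the set of $U$-valued random variables on $S$, $\mathcal{I}$ an ideal on $\mathbb{N}$, and $\underline{X}=\{X_n\}$ a sequence in $\mathfrak{X}$. If $\mathfrak{B}$ is a totally bounded subset of $(\mathfrak{X}^0,\rho)$ such that $\{n\in\mathbb{N}:X_n\in\mathfrak{B}\}\notin\mathcal{I}$, then $\Gamma^{r^w}_{\underline{X}}(\mathcal{I}^{\mathbb{P}})\neq\varnothing$ for every $r>0$.
   Context: The Ky Fan metric is $\rho(X,Y)=\inf\{\varepsilon>0:\mathbb{P}(d(X,Y)>\varepsilon)\leq\varepsilon\}$; $\mathfrak{X}^0$ is the set of equivalence classes of $\mathfrak{X}$ under almost sure equality, on which $\rho$ is a metric. An ideal on $\mathbb{N}$ is a family $\mathcal{I}\subseteq\mathcal{P}(\mathbb{N})$ with $\varnothing\in\mathcal{I}$, closed under finite unions and under subsets. $\Gamma^{r^w}_{\underline{X}}(\mathcal{I}^{\mathbb{P}})$ (weak rough $\mathcal{I}$-cluster points in probability) is the set of $Y\in\mathfrak{X}$ for which there is $\delta_*=\delta_*(Y)>0$ with $\{n:\mathbb{P}(d(X_n,Y)<r+\varepsilon)>\delta_*\}\notin\mathcal{I}$ for every $\varepsilon>0$. *)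

From HB Require Import structures.
From mathcomp Require Import all_boot all_order all_algebra.
From mathcomp Require Import all_classical all_reals all_analysis.
Set Implicit Arguments. Unset Strict Implicit. Unset Printing Implicit Defensive.
Import Order.TTheory GRing.Theory Num.Theory.
Local Open Scope classical_set_scope.
Local Open Scope ring_scope.

Section Defs.
Context {R : realType}.

Definition is_metric (U : Type) (dist : U -> U -> R) : Prop :=
  [/\ (forall x y, 0 <= dist x y),
      (forall x y, dist x y = 0 <-> x = y),
      (forall x y, dist x y = dist y x) &
      (forall x y z, dist x z <= dist x y + dist y z)].

Definition metric_separable (U : Type) (dist : U -> U -> R) : Prop :=
  exists D : set U, countable D /\
    forall x (e : R), 0 < e -> exists2 y, D y & dist x y < e.

Definition metric_open (U : Type) (dist : U -> U -> R) (O : set U) : Prop :=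
  forall x, O x -> exists2 e : R, 0 < e & forall y, dist x y < e -> O y.

Definition random_var (d : measure_display) (S : measurableType d)
  (U : Type) (dist : U -> U -> R) (X : S -> U) : Prop :=
  forall O : set U, metric_open dist O -> measurable (X @^-1` O).

Definition kyfan (d : measure_display) (S : measurableType d)
  (P : probability S R) (U : Type) (dist : U -> U -> R) (X Y : S -> U) : R :=
  inf [set eps : R | 0 < eps /\
        (P [set s | (eps < dist (X s) (Y s))%R] <= eps%:E)%E].

Definition as_eq (d : measure_display) (S : measurableType d)
  (P : probability S R) (U : Type) (X Y : S -> U) : Prop :=
  P [set s | X s <> Y s] = 0%E.

(* A subset B of X^0 is represented by a predicate on random variables; the
   class of X belongs to B iff X is a.s. equal to some member of B. *)
Definition in_classes (d : measure_display) (S : measurableType d)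
  (P : probability S R) (U : Type) (B : set (S -> U)) (X : S -> U) : Prop :=
  exists2 Z, B Z & as_eq P X Z.

Definition totally_bounded_kyfan (d : measure_display) (S : measurableType d)
  (P : probability S R) (U : Type) (dist : U -> U -> R) (B : set (S -> U)) : Prop :=
  forall eps : R, 0 < eps ->
    exists (k : nat) (c : nat -> S -> U),
      (forall i, (i < k)%N -> random_var dist (c i)) /\
      forall Z, B Z -> exists2 i, (i < k)%N & kyfan P dist Z (c i) < eps.

End Defs.

Definition is_ideal (I : set (set nat)) : Prop :=
  [/\ I set0,
      (forall A B, I A -> I B -> I (A `|` B)) &
      (forall A B, B `<=` A -> I A -> I B)].

Definition weak_rough_cluster_pts {R : realType} (d : measure_display)
  (S : measurableType d) (P : probability S R) (U : Type) (dist : U -> U -> R)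
  (I : set (set nat)) (X : nat -> S -> U) (r : R) : set (S -> U) :=
  [set Y | random_var dist Y /\
     exists2 delta : R, 0 < delta &
       forall eps : R, 0 < eps ->
         ~ I [set n | (delta%:E < P [set s | (dist (X n s) (Y s) < r + eps)%R])%E]].

From HB Require Import structures.
From mathcomp Require Import all_boot all_order all_algebra.
From mathcomp Require Import all_classical all_reals all_analysis.
From mathcomp Require Import lra.
Import Order.TTheory GRing.Theory Num.Theory.
Local Open Scope classical_set_scope.
Local Open Scope ring_scope.

(* Cover B by finitely many Ky Fan balls of radius e = min(r, 1/2) around
   random variables c_0, ..., c_(k-1).  Since the ideal is closed under finite
   unions, for some i the set of n with X_n within rho-distance e of c_i is not
   in I.  For such n, rho(X_n, c_i) < e forces P(d(X_n, c_i) < e) > 1 - e, and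
   e <= r, so c_i is a weak rough cluster point with delta = 1 - e. *)

Lemma measurable_countable_bigcup d (S : measurableType d) (I : Type)
    (D : set I) (F : I -> set S) :
  countable D -> (forall i, D i -> measurable (F i)) ->
  measurable (\bigcup_(i in D) F i).
Proof.
move=> cD mF; rewrite bigcup_set_type.
apply: countable_bigcupT_measurable => [|i]; last exact/mF/set_valP.
by rewrite (eq_countable (card_setT _)).
Qed.

Lemma ideal_bigcup_ord {I : set (set nat)} {F : nat -> set nat} {k : nat} :
  is_ideal I -> (forall i, (i < k)%N -> I (F i)) ->
  I [set n | exists2 i, (i < k)%N & F i n].
Proof.
case=> I0 IU _; elim: k => [_|k IHk IF].
  by rewrite (_ : [set n | _] = set0) //; apply/seteqP; split=> n // [].
rewrite (_ : [set n | _] = [set n | exists2 i, (i < k)%N & F i n] `|` F k).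
  by apply: IU; [apply: IHk => i /ltnW/IF | exact: IF].
apply/seteqP; split=> n /=.
  case=> i; rewrite ltnS leq_eqVlt => /orP[/eqP -> | ik] Fin; first by right.
  by left; exists i.
by case=> [[i ik Fin] | Fkn]; [exists i => //; exact: ltnW | exists k].
Qed.

Lemma ideal_finite_cover {I : set (set nat)} {A : set nat}
    {F : nat -> set nat} {k : nat} :
  is_ideal I -> ~ I A -> A `<=` [set n | exists2 i, (i < k)%N & F i n] ->
  exists2 i, (i < k)%N & ~ I (F i).
Proof.
move=> hI IA AF; apply: contrapT => noF; apply: IA.
case: (hI) => _ _ Isub; apply: Isub AF _.
by apply: ideal_bigcup_ord => // i ik; apply: contrapT => Fi; apply: noF; exists i.
Qed.

Section metric_random_variables.
Context {R : realType} {U : Type} {dist : U -> U -> R}.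
Hypothesis hmetric : is_metric dist.

Lemma metric_open_ball_l q a : metric_open dist [set u | dist u q < a].
Proof.
case: hmetric => _ _ dC dT x xq.
exists (a - dist x q); first by rewrite subr_gt0.
by move=> y xy /=; have := dT y x q; rewrite (dC y x); lra.
Qed.

Lemma metric_open_ball_r q a : metric_open dist [set u | dist q u < a].
Proof.
case: hmetric => _ _ _ dT x qx.
exists (a - dist q x); first by rewrite subr_gt0.
by move=> y xy /=; have := dT q x y; lra.
Qed.

Lemma dist_gt0 x y : 0 < dist x y <-> x <> y.
Proof.
case: hmetric => d0 d_eq0 _ _; split.
  by move=> + xy; rewrite xy (d_eq0 _ _).2 ?ltxx.
by move=> xy; rewrite lt0r d0 andbT; apply/eqP => /d_eq0.
Qed.

Hypothesis hsep : metric_separable dist.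
Context {d : measure_display} {S : measurableType d}.

Lemma measurable_dist_lt {X Y : S -> U} :
  random_var dist X -> random_var dist Y -> forall t,
  measurable [set s | dist (X s) (Y s) < t].
Proof.
move=> hX hY t; case: hsep => D [cD dD]; case: (hmetric) => _ _ dC dT.
pose a m : R := m.+1%:R^-1.
have -> : [set s | dist (X s) (Y s) < t] = \bigcup_(q in D) \bigcup_m
    ([set s | dist (X s) q < a m] `&` [set s | dist q (Y s) < t - a m]).
  apply/seteqP; split=> s /=.
  - move=> XYt; have [m mid] : exists m, (dist (X s) (Y s) + t) / 2 + a m < t.
      by apply: ltr_add_invr; lra.
    have [q Dq Xq] := dD (X s) (a m) (ltac:(by rewrite invr_gt0)).
    exists q => //; exists m => //; split=> //=.
    by have := dT q (X s) (Y s); rewrite (dC q (X s)); lra.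
  - by case=> q _ [m _ [/= Xq qY]]; have := dT (X s) q (Y s); lra.
apply: measurable_countable_bigcup => // q _; apply: bigcupT_measurable => m.
by apply: measurableI; [exact: hX _ (metric_open_ball_l _ _) |
                       exact: hY _ (metric_open_ball_r _ _)].
Qed.

Lemma measurable_dist_gt {X Y : S -> U} :
  random_var dist X -> random_var dist Y -> forall t,
  measurable [set s | t < dist (X s) (Y s)].
Proof.
move=> hX hY t; have -> : [set s | t < dist (X s) (Y s)] =
    ~` \bigcap_m [set s | dist (X s) (Y s) < t + m.+1%:R^-1].
  apply/seteqP; split=> s /=.
  - by move=> /ltr_add_invr[m tXY] /(_ m I) /= /lt_trans /(_ tXY); rewrite ltxx.
  - move=> notall; rewrite ltNge; apply/negP => XYt; apply: notall => m _ /=.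
    by apply: le_lt_trans XYt _; rewrite ltrDl invr_gt0.
by apply/measurableC/bigcapT_measurable => m; exact: measurable_dist_lt.
Qed.

Context {P : probability S R}.

Lemma kyfan_lt_measure_dist_lt {X Y : S -> U} :
  random_var dist X -> random_var dist Y -> forall e,
  kyfan P dist X Y < e ->
  ((1 - e)%:E < P [set s | (dist (X s) (Y s) < e)%R])%E.
Proof.
move=> hX hY e; rewrite /kyfan => XYe.
have one_in_kyfan_set :
    0 < 1 :> R /\ (P [set s | (1 < dist (X s) (Y s))%R] <= 1%:E)%E.
  by split=> //; exact/probability_le1/measurable_dist_gt.
have [e' [e'0 Pe'] e'e] := inf_lt (ex_intro _ 1 one_in_kyfan_set) XYe.
have far := measurable_dist_gt hX hY e'.
have near_e : ~` [set s | e' < dist (X s) (Y s)] `<=`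
    [set s | dist (X s) (Y s) < e].
  by move=> s /negP; rewrite -leNgt => /le_lt_trans; apply.
have Pnear : (P (~` [set s | (e' < dist (X s) (Y s))%R]) <=
              P [set s | (dist (X s) (Y s) < e)%R])%E.
  by apply: le_measure near_e; rewrite inE; [exact: measurableC |
                                             exact: measurable_dist_lt].
rewrite probability_setC // in Pnear; apply: lt_le_trans Pnear.
apply: (@lt_le_trans _ _ (1 - e'%:E)%E); first by rewrite -EFinD lte_fin; lra.
exact: leeB.
Qed.

Lemma as_eq_measure_dist_lt {X Y Z : S -> U} :
  random_var dist X -> random_var dist Y -> random_var dist Z ->
  as_eq P X Z -> forall t,
  (P [set s | (dist (Z s) (Y s) < t)%R] <=
   P [set s | (dist (X s) (Y s) < t)%R])%E.
Proof.
move=> hX hY hZ XZ t.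
have neqE : [set s | (0 < dist (X s) (Z s))%R] = [set s | X s <> Z s].
  by apply/seteqP; split=> s /dist_gt0.
have mN := measurable_dist_gt hX hZ 0.
rewrite /as_eq -neqE in XZ.
have cover : [set s | (dist (Z s) (Y s) < t)%R] `<=`
    [set s | (dist (X s) (Y s) < t)%R] `|` [set s | (0 < dist (X s) (Z s))%R].
  move=> s /= ZYt; have [XZs|/dist_gt0] := pselect (X s = Z s); last by right.
  by left; rewrite XZs.
have mXY := measurable_dist_lt hX hY t.
have PZY : (P [set s | (dist (Z s) (Y s) < t)%R] <=
    P ([set s | (dist (X s) (Y s) < t)%R] `|`
       [set s | (0 < dist (X s) (Z s))%R]))%E.
  by apply: le_measure cover; rewrite inE; [exact: measurable_dist_lt |
                                           exact: measurableU].
by rewrite measureU0 in PZY.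
Qed.

End metric_random_variables.

Theorem proposition3p10 (R : realType) (d : measure_display)
  (S : measurableType d) (P : probability S R)
  (U : Type) (dist : U -> U -> R)
  (hmetric : is_metric dist) (hsep : metric_separable dist)
  (I : set (set nat)) (hI : is_ideal I)
  (X : nat -> S -> U) (hX : forall n, random_var dist (X n))
  (B : set (S -> U)) (hB : forall Z, B Z -> random_var dist Z)
  (htb : totally_bounded_kyfan P dist B)
  (hnotI : ~ I [set n | in_classes P B (X n)]) :
  forall r : R, 0 < r -> weak_rough_cluster_pts P dist I X r !=set0.
Proof.
move=> r r0; set e : R := Num.min r 2^-1.
have e0 : 0 < e by rewrite lt_min r0 /=; lra.
have er : e <= r by rewrite ge_min lexx.
have e1 : e < 1 by rewrite gt_min (_ : 2^-1 < 1) ?orbT //; lra.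
have [k [c [hc hnet]]] := htb e e0.
pose close i :=
  [set n | ((1 - e)%:E < P [set s | (dist (X n s) (c i s) < e)%R])%E].
have cover : [set n | in_classes P B (X n)] `<=`
    [set n | exists2 i, (i < k)%N & close i n].
  move=> n [Z BZ XZ]; have [i ik Zi] := hnet Z BZ; exists i => //.
  have hZ := hB Z BZ.
  apply: lt_le_trans _ (as_eq_measure_dist_lt hmetric hsep (hX n) (hc i ik) hZ XZ e).
  exact: (kyfan_lt_measure_dist_lt hmetric hsep hZ (hc i ik) e Zi).
have [i ik not_close] := ideal_finite_cover hI hnotI cover.
exists (c i); split; first exact: hc.
exists (1 - e); first by rewrite subr_gt0.
move=> eps eps0 Ieps; apply: not_close; case: hI => _ _ Isub; apply: Isub Ieps.
move=> n /= closen; apply: lt_le_trans closen _.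
have mXc := measurable_dist_lt hmetric hsep (hX n) (hc i ik).
by apply: le_measure; rewrite ?inE // => s /= /lt_le_trans; apply; lra.
Qed.
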